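(* Let $\mathbb{F}$ be a field and let $n>4$ be an integer. Then for each $p\in\{2,\ldots,n-3\}$ and each non-negative integer $q\le p$ there exists a unital $\mathbb{F}$-algebra $\mathcal{A}$ with $\dim\mathcal{A}=n$ and $l(\mathcal{A})=2^{p}+2^{q}$.
   Context: All algebras are finite-dimensional, unital, not necessarily associative algebras over the field $\mathbb{F}$. For a finite generating set $S$ of an algebra $\mathcal{A}$, a word in $S$ is any product (with any bracketing) of finitely many elements of $S$; its length is the number of factors, and $1$ is a word of length $0$. $L_i(S)$ is the linear span of all words in $S$ of length at most $i$. The length of $S$ is $l(S)=\min\{k\ge0: L_k(S)=\mathcal{A}\}$, and $l(\mathcal{A})=\max\{l(S): S\text{ a finite generating set of }\mathcal{A}\}$. *)

From HB Require Import structures.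
From mathcomp Require Import all_boot all_order all_algebra.
Set Implicit Arguments. Unset Strict Implicit. Unset Printing Implicit Defensive.
Import GRing.Theory.
Local Open Scope ring_scope.

(* A (not necessarily associative) n-dimensional F-algebra is modelled on the
   coordinate space 'rV[F]_n with a multiplication map [mul] and an element [one]. *)
Section NAAlg.
Variables (F : fieldType) (n : nat).
Local Notation V := 'rV[F]_n.

Definition bilinear_mul (mul : V -> V -> V) : Prop :=
  (forall (a : F) (x y z : V), mul (a *: x + y) z = a *: mul x z + mul y z) /\
  (forall (a : F) (x y z : V), mul z (a *: x + y) = a *: mul z x + mul z y).

Definition is_unit_elt (mul : V -> V -> V) (one : V) : Prop :=
  forall x : V, mul one x = x /\ mul x one = x.

Inductive is_word (mul : V -> V -> V) (one : V) (S : seq V) : nat -> V -> Prop :=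
  | word_one : is_word mul one S 0 one
  | word_gen (s : V) : s \in S -> is_word mul one S 1 s
  | word_mul (k1 k2 : nat) (x y : V) :
      (0 < k1)%N -> (0 < k2)%N ->
      is_word mul one S k1 x -> is_word mul one S k2 y ->
      is_word mul one S (k1 + k2) (mul x y).

Definition in_L (mul : V -> V -> V) (one : V) (S : seq V) (i : nat) (v : V) : Prop :=
  exists ws : seq V,
    (forall w, w \in ws -> exists k, (k <= i)%N /\ is_word mul one S k w) /\
    v \in <<ws>>%VS.

Definition L_full mul one S i : Prop := forall v : V, in_L mul one S i v.

Definition generating mul one S : Prop := exists i, L_full mul one S i.

Definition set_length mul one S (m : nat) : Prop :=
  L_full mul one S m /\ forall k, (k < m)%N -> ~ L_full mul one S k.

Definition alg_length mul one (m : nat) : Prop :=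
  (exists S : seq V, generating mul one S /\ set_length mul one S m) /\
  (forall (S : seq V) (m' : nat), generating mul one S ->
      set_length mul one S m' -> (m' <= m)%N).
End NAAlg.

(* The example is the unitization of the product on span(e_1, ..., e_(n-1))
   with e_i e_i = e_(i+1) for 1 <= i <= p and e_(p+1) e_(q+1) = e_(p+2).
   Giving e_i the weight 2^(i-1) for i <= p+1, e_(p+2) the weight 2^p + 2^q and
   the remaining basis vectors the weight 1, words of length k in
   S0 = {e_1, e_(p+3), ..., e_(n-1)} are homogeneous of weight k, so S0 has
   length 2^p + 2^q.  Conversely all products lie in F 1 + M with
   M = span(e_2, ..., e_(p+2)), so a generating set S spans the algebra modulo
   F 1 + M and some x in F 1 + <S> is e_1 modulo M.  The j-th iterated square
   x_j of x (in L_(2^j)(S)) is e_(j+1) modulo higher basis vectors of M, and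
   x_p x_q = e_(p+2); this triangular family puts M, and with it the whole
   algebra, in L_(2^p + 2^q)(S). *)

From HB Require Import structures.
From mathcomp Require Import all_boot all_order all_algebra.
From mathcomp Require Import ring zify.
Set Implicit Arguments. Unset Strict Implicit. Unset Printing Implicit Defensive.
Import GRing.Theory.
Local Open Scope ring_scope.

Section Words.
Variables (F : fieldType) (n : nat).
Local Notation V := 'rV[F]_n.

Lemma span_ind (P : V -> Prop) (ws : seq V) :
  P 0 -> (forall a x y, P x -> P y -> P (a *: x + y)) ->
  (forall w, w \in ws -> P w) -> forall v, v \in <<ws>>%VS -> P v.
Proof.
move=> P0 Plin Pws v v_ws; rewrite (coord_span (X := in_tuple ws) v_ws).
apply: (big_ind P) => //.
  by move=> x y Px Py; rewrite -[x]scale1r; apply: Plin.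
move=> i _; rewrite -[_ *: _]addr0; apply: Plin => //.
by apply: Pws; apply: mem_nth.
Qed.

Variables (mul : V -> V -> V) (one : V).

Fixpoint sqpow (x : V) (j : nat) : V :=
  if j is j'.+1 then mul (sqpow x j') (sqpow x j') else x.

Section FixedSet.
Variable S : seq V.

Lemma in_L0 i : in_L mul one S i 0.
Proof. by exists [::]; split => //; exact: mem0v. Qed.

Lemma in_L_lin i a x y : in_L mul one S i x -> in_L mul one S i y ->
  in_L mul one S i (a *: x + y).
Proof.
move=> [wx [Hwx x_wx]] [wy [Hwy y_wy]]; exists (wx ++ wy); split.
  by move=> w; rewrite mem_cat => /orP [] ?; [apply: Hwx | apply: Hwy].
by rewrite span_cat memv_add ?memvZ.
Qed.

Lemma in_L_leq i j v : (i <= j)%N -> in_L mul one S i v -> in_L mul one S j v.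
Proof.
move=> lij [ws [Hws v_ws]]; exists ws; split => // w /Hws [k [lki wk]].
by exists k; split => //; apply: leq_trans lij.
Qed.

Lemma in_L_word i k w : (k <= i)%N -> is_word mul one S k w -> in_L mul one S i w.
Proof.
move=> lki wk; exists [:: w]; split; last by rewrite memv_span ?mem_head.
by move=> w'; rewrite inE => /eqP ->; exists k.
Qed.

Lemma in_L_one i : in_L mul one S i one.
Proof. exact: in_L_word (word_one _ _ _). Qed.

Lemma in_L_span i u : (0 < i)%N -> u \in <<S>>%VS -> in_L mul one S i u.
Proof.
move=> i_gt0 uS; exists S; split => // w wS.
by exists 1%N; split => //; exact: word_gen.
Qed.

Lemma word_len0 k w : is_word mul one S k w -> k = 0%N -> w = one.
Proof. by case=> // k1 k2 x y k1_gt0 k2_gt0 _ _; lia. Qed.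

Lemma generating_ind (P : V -> Prop) :
  P 0 -> (forall a x y, P x -> P y -> P (a *: x + y)) ->
  P one -> (forall s, s \in S -> P s) -> (forall x y, P x -> P y -> P (mul x y)) ->
  generating mul one S -> forall v, P v.
Proof.
move=> P0 Plin P1 PS Pmul [i fullS] v; have [ws [Hws v_ws]] := fullS v.
apply: (span_ind P0 Plin _ v_ws) => w /Hws [k [_ wk]].
by elim: wk => // k1 k2 x y _ _ _ Px _ Py; apply: Pmul.
Qed.

Hypotheses (mul_bil : bilinear_mul mul) (mul_one : is_unit_elt mul one).

Lemma mul0x z : mul 0 z = 0.
Proof.
have := mul_bil.1 1 0 0 z; rewrite !scale1r addr0.
by move/(congr1 (fun t => t - mul 0 z)); rewrite subrr addrK.
Qed.

Lemma mulx0 z : mul z 0 = 0.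
Proof.
have := mul_bil.2 1 0 0 z; rewrite !scale1r addr0.
by move/(congr1 (fun t => t - mul z 0)); rewrite subrr addrK.
Qed.

Lemma in_L_mul i j u v : in_L mul one S i u -> in_L mul one S j v ->
  in_L mul one S (i + j) (mul u v).
Proof.
move=> [wu [Hwu u_wu]] [wv [Hwv v_wv]].
apply: (span_ind (P := fun x => in_L _ _ _ _ (mul x v)) _ _ _ u_wu).
- by rewrite mul0x; exact: in_L0.
- by move=> a x y Px Py; rewrite mul_bil.1; exact: in_L_lin.
move=> w /Hwu [k [lki wk]].
apply: (span_ind (P := fun y => in_L _ _ _ _ (mul w y)) _ _ _ v_wv).
- by rewrite mulx0; exact: in_L0.
- by move=> a x y Px Py; rewrite mul_bil.2; exact: in_L_lin.
move=> w' /Hwv [k' [lk'j wk']].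
have [k0|k_gt0] := posnP k.
  by rewrite (word_len0 wk k0) (mul_one w').1; apply: in_L_word wk'; lia.
have [k'0|k'_gt0] := posnP k'.
  by rewrite (word_len0 wk' k'0) (mul_one w).2; apply: in_L_word wk; lia.
by apply: in_L_word (word_mul k_gt0 k'_gt0 wk wk'); lia.
Qed.

Lemma in_L_sqpow x j : in_L mul one S 1 x -> in_L mul one S (2 ^ j) (sqpow x j).
Proof.
move=> x1; elim: j => [|j IH] //=.
by rewrite expnS mul2n -addnn; exact: in_L_mul.
Qed.

End FixedSet.

Lemma alg_length_witness (S0 : seq V) (K : nat) :
  L_full mul one S0 K -> (forall k, (k < K)%N -> ~ L_full mul one S0 k) ->
  (forall S, generating mul one S -> L_full mul one S K) ->
  alg_length mul one K.
Proof.
move=> fullS0 notfullS0 fullK; split; first by exists S0; split; first exists K.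
move=> S m genS [_ notfullS]; rewrite leqNgt; apply/negP => ltKm.
exact: notfullS ltKm (fullK S genS).
Qed.

End Words.

Section Example.
Variables (F : fieldType) (m p q : nat).
Hypotheses (p3_le_n : (p.+3 <= m.+1)%N) (q_le_p : (q <= p)%N).
Local Notation n := m.+1.
Local Notation V := 'rV[F]_n.
Local Notation K := (2 ^ p + 2 ^ q)%N.

Definition cmp (x : V) (k : nat) : F := x 0 (inord k).
Definition mkrow (f : nat -> F) : V := \row_(j < n) f j.

Lemma cmp_mkrow f k : (k < n)%N -> cmp (mkrow f) k = f k.
Proof. by move=> lkn; rewrite /cmp mxE inordK. Qed.

Lemma cmpD x y k : cmp (x + y) k = cmp x k + cmp y k. Proof. by rewrite /cmp mxE. Qed.
Lemma cmpZ a x k : cmp (a *: x) k = a * cmp x k. Proof. by rewrite /cmp mxE. Qed.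
Lemma cmpN x k : cmp (- x) k = - cmp x k. Proof. by rewrite /cmp mxE. Qed.
Lemma cmp0 k : cmp 0 k = 0. Proof. by rewrite /cmp mxE. Qed.
Definition cmpE := (cmpD, cmpZ, cmpN, cmp0).

Lemma cmp_inj x y : (forall k, (k < n)%N -> cmp x k = cmp y k) -> x = y.
Proof.
by move=> Exy; apply/rowP => j; have := Exy j (ltn_ord j); rewrite /cmp inord_val.
Qed.

Definition evec (i : nat) : V := mkrow (fun k => (k == i)%:R).
Definition one : V := evec 0.

Lemma cmp_evec i k : (k < n)%N -> cmp (evec i) k = (k == i)%:R.
Proof. exact: cmp_mkrow. Qed.

Lemma evec_delta (j : 'I_n) : 'e_j = evec j.
Proof.
by apply: cmp_inj => k lkn; rewrite cmp_evec // /cmp mxE /= -val_eqE /= inordK.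
Qed.

Definition nilmul (x y : V) : V := mkrow (fun k =>
  if (2 <= k <= p.+1)%N then cmp x k.-1 * cmp y k.-1
  else if k == p.+2 then cmp x p.+1 * cmp y q.+1 else 0).

Definition mul (x y : V) : V :=
  cmp x 0 *: y + cmp y 0 *: x - (cmp x 0 * cmp y 0) *: one + nilmul x y.

Lemma mul_bilinear : bilinear_mul mul.
Proof.
split=> a x y z; apply: cmp_inj => k lkn;
  by rewrite /mul /nilmul !cmpE !cmp_mkrow // !cmpE; repeat case: ifP => _; ring.
Qed.

Lemma nilmul1x x : nilmul one x = 0.
Proof.
apply: cmp_inj => k lkn; rewrite cmp_mkrow // cmp0 !cmp_evec; try lia.
case: ifP => [/andP[k_gt1 _]|_]; last by case: ifP => //= _; rewrite mul0r.
have -> : (k.-1 == 0%N) = false by lia.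
by rewrite /= mul0r.
Qed.

Lemma nilmulx1 x : nilmul x one = 0.
Proof.
apply: cmp_inj => k lkn; rewrite cmp_mkrow // cmp0 !cmp_evec; try lia.
case: ifP => [/andP[k_gt1 _]|_]; last by case: ifP => //= _; rewrite mulr0.
have -> : (k.-1 == 0%N) = false by lia.
by rewrite /= mulr0.
Qed.

Lemma mul_unit : is_unit_elt mul one.
Proof.
move=> x; rewrite /mul nilmul1x nilmulx1 !cmp_evec //.
split; apply: cmp_inj => k lkn; rewrite !cmpE cmp_evec //=;
  by case: (k == 0); rewrite /=; ring.
Qed.

Definition supp_in (i : nat) (x : V) : Prop :=
  forall k, (k < n)%N -> (k < i)%N || (p.+2 < k)%N -> cmp x k = 0.

Definition lead_at (i : nat) (x : V) : Prop := supp_in i x /\ cmp x i = 1.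

Lemma supp_in_lin i a x y : supp_in i x -> supp_in i y -> supp_in i (a *: x + y).
Proof. by move=> sx sy k lkn out; rewrite !cmpE sx // sy // mulr0 addr0. Qed.

Lemma supp_in_leq i j x : (i <= j)%N -> supp_in j x -> supp_in i x.
Proof. by move=> lij sx k lkn out; apply: sx => //; lia. Qed.

Lemma supp_in_nilmul x y : supp_in 2 (nilmul x y).
Proof.
move=> k lkn out; rewrite cmp_mkrow //.
by rewrite ifF; [rewrite ifF //; apply/eqP | apply/negbTE]; lia.
Qed.

(* [in_FSM S v] : v lies in F 1 + <S> + M, with M := span(e_2, ..., e_(p+2)). *)
Definition in_FSM (S : seq V) (v : V) : Prop :=
  exists a u, u \in <<S>>%VS /\ supp_in 2 (v - a *: one - u).

Section FSM.
Variable S : seq V.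

Lemma in_FSM_lin b x y : in_FSM S x -> in_FSM S y -> in_FSM S (b *: x + y).
Proof.
move=> [a1 [u1 [u1S t1]]] [a2 [u2 [u2S t2]]].
exists (b * a1 + a2), (b *: u1 + u2); split; first by rewrite memvD ?memvZ.
have -> : b *: x + y - (b * a1 + a2) *: one - (b *: u1 + u2) =
          b *: (x - a1 *: one - u1) + (y - a2 *: one - u2).
  by apply: cmp_inj => k lkn; rewrite !cmpE; ring.
exact: supp_in_lin.
Qed.

Lemma in_FSM_supp t : supp_in 2 t -> in_FSM S t.
Proof.
by move=> st; exists 0, 0; split; rewrite ?mem0v // scale0r !subr0.
Qed.

Lemma in_FSM0 : in_FSM S 0.
Proof. by apply: in_FSM_supp => k; rewrite cmp0. Qed.

Lemma in_FSM1 : in_FSM S one.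
Proof.
exists 1, 0; split; first exact: mem0v.
by rewrite scale1r subrr subr0 => k; rewrite cmp0.
Qed.

Lemma in_FSM_gen s : s \in S -> in_FSM S s.
Proof.
move=> sS; exists 0, s; split; first exact: memv_span.
by rewrite scale0r subr0 subrr => k; rewrite cmp0.
Qed.

Lemma in_FSM_mul x y : in_FSM S x -> in_FSM S y -> in_FSM S (mul x y).
Proof.
move=> Sx Sy.
have -> : mul x y = cmp x 0 *: y + (cmp y 0 *: x +
                    (- (cmp x 0 * cmp y 0) *: one + (1 *: nilmul x y + 0))).
  by apply: cmp_inj => k lkn; rewrite /mul !cmpE; ring.
do 3 apply: in_FSM_lin => //; first exact: in_FSM1.
by apply: in_FSM_lin; [apply: in_FSM_supp; exact: supp_in_nilmul | exact: in_FSM0].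
Qed.

Lemma generating_in_FSM : generating mul one S -> forall v, in_FSM S v.
Proof.
apply: generating_ind; [exact: in_FSM0 | exact: in_FSM_lin | exact: in_FSM1 |
  exact: in_FSM_gen | exact: in_FSM_mul].
Qed.

End FSM.

Definition S0 : seq V := [seq evec k | k <- 1%N :: iota p.+3 (n - p.+3)].

Lemma in_FSM_S0_evec k : (k < n)%N -> in_FSM S0 (evec k).
Proof.
move=> lkn; have [->|k_neq0] := eqVneq k 0%N; first exact: in_FSM1.
have [gen_k|not_gen_k] := boolP ((k == 1%N) || (p.+2 < k)%N).
  apply/in_FSM_gen/map_f; rewrite inE mem_iota; lia.
by apply: in_FSM_supp => j ljn out; rewrite cmp_evec //; case: eqP => // jk; lia.
Qed.

Lemma in_FSM_S0 v : in_FSM S0 v.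
Proof.
rewrite (row_sum_delta v); apply: (big_ind (in_FSM S0)); first exact: in_FSM0.
  by move=> x y S0x S0y; rewrite -[x]scale1r; apply: in_FSM_lin.
move=> j _; rewrite -[_ *: _]addr0 evec_delta.
exact: in_FSM_lin (in_FSM_S0_evec (ltn_ord j)) (in_FSM0 _).
Qed.

Lemma mul_nilmul x y : cmp x 0 = 0 -> cmp y 0 = 0 -> mul x y = nilmul x y.
Proof. by move=> x0 y0; apply: cmp_inj => k lkn; rewrite /mul !cmpE x0 y0; ring. Qed.

Definition deg (k : nat) : nat :=
  (if k == 0 then 0 else if k <= p.+1 then 2 ^ k.-1
   else if k == p.+2 then K else 1)%N.

Definition homog (d : nat) (x : V) : Prop :=
  forall k, (k < n)%N -> deg k != d -> cmp x k = 0.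

Lemma deg_sq k : (0 < k <= p)%N -> deg k.+1 = (deg k + deg k)%N.
Proof.
case: k => [//|k] /andP[_ lkp]; rewrite /deg /= !ifT ?addnn -?mul2n -?expnS //; lia.
Qed.

Lemma deg_p2 : deg p.+2 = K.
Proof. by rewrite /deg /= ltnn eqxx. Qed.

Lemma deg_top : deg p.+2 = (deg p.+1 + deg q.+1)%N.
Proof. by rewrite deg_p2 /deg /= !ifT //; lia. Qed.

Lemma deg_gen k : (k == 1%N) || (p.+2 < k)%N -> deg k = 1%N.
Proof. by case/orP=> [/eqP -> // | k_gt]; rewrite /deg !ifF //; lia. Qed.

Lemma homog_nilmul d1 d2 x y :
  homog d1 x -> homog d2 y -> homog (d1 + d2) (nilmul x y).
Proof.
move=> hx hy k lkn dk; rewrite cmp_mkrow //.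
case: ifP => [/andP[k_gt1 lkp]|_].
  have dk1 : deg k = (deg k.-1 + deg k.-1)%N by rewrite -deg_sq; [congr deg | ]; lia.
  have [d1k|ne1] := eqVneq (deg k.-1) d1; last by rewrite hx ?mul0r //; lia.
  have [d2k|ne2] := eqVneq (deg k.-1) d2; last by rewrite hy ?mulr0 //; lia.
  by move: dk; rewrite dk1 {1}d1k d2k eqxx.
case: eqP => [kp2|//]; move: dk; rewrite kp2 deg_top => dk.
have [d1k|ne1] := eqVneq (deg p.+1) d1; last by rewrite hx ?mul0r //; lia.
have [d2k|ne2] := eqVneq (deg q.+1) d2; last by rewrite hy ?mulr0 //; lia.
by move: dk; rewrite d1k d2k eqxx.
Qed.

Lemma homog_word k w : is_word mul one S0 k w -> homog k w.
Proof.
elim=> {k w} [j ljn|s /mapP[k S0k ->] j ljn|k1 k2 x y k1_gt0 k2_gt0 _ hx _ hy].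
- by rewrite cmp_evec //; have [->|] := eqVneq j 0%N.
- rewrite cmp_evec //; have [-> /negP[]|//] := eqVneq j k.
  by rewrite deg_gen //; move: S0k; rewrite inE mem_iota; lia.
- have x0 : cmp x 0 = 0 by apply: hx => //; rewrite /deg /=; lia.
  have y0 : cmp y 0 = 0 by apply: hy => //; rewrite /deg /=; lia.
  by rewrite mul_nilmul //; exact: homog_nilmul.
Qed.

Lemma not_L_full_S0 k : (k < K)%N -> ~ L_full mul one S0 k.
Proof.
move=> lkK /(_ (evec p.+2)) [ws [Hws top_ws]].
have : cmp (evec p.+2) p.+2 = 0.
  apply: (span_ind (P := fun v => cmp v p.+2 = 0) _ _ _ top_ws).
  - exact: cmp0.
  - by move=> a x y x0 y0; rewrite !cmpE x0 y0 mulr0 addr0.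
  move=> w /Hws [k' [lk'k wk']]; apply: (homog_word wk'); first lia.
  by rewrite deg_p2; apply/eqP; lia.
by rewrite cmp_evec // eqxx; apply/eqP; rewrite oner_eq0.
Qed.

Lemma lead_at_cmp0 i x : (0 < i)%N -> lead_at i x -> cmp x 0 = 0.
Proof. by move=> i_gt0 [sx _]; apply: sx => //; lia. Qed.

Lemma lead_at_sq i x : (0 < i <= p)%N -> lead_at i x -> lead_at i.+1 (mul x x).
Proof.
move=> /andP[i_gt0 lip] lx; have [sx x_i] := lx.
rewrite mul_nilmul ?(lead_at_cmp0 i_gt0 lx) //; split => [k lkn out|]; last first.
  by rewrite cmp_mkrow ?ifT ?x_i ?mulr1 //; lia.
rewrite cmp_mkrow //; case: ifP => [/andP[k_gt1 lkp]|_].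
  by rewrite sx ?mul0r //; lia.
by rewrite ifF //; apply/eqP; lia.
Qed.

Lemma lead_at_sqpow x j : lead_at 1 x -> (j <= p)%N -> lead_at j.+1 (sqpow mul x j).
Proof.
by move=> lx; elim: j => [//|j IH] ljp; apply: lead_at_sq (IH (ltnW ljp)); lia.
Qed.

Lemma mul_lead_top x y : lead_at p.+1 x -> lead_at q.+1 y -> mul x y = evec p.+2.
Proof.
move=> lx ly; have [[sx x_p1] [_ y_q1]] := (lx, ly).
rewrite mul_nilmul ?(lead_at_cmp0 _ lx) ?(lead_at_cmp0 _ ly) //.
apply: cmp_inj => k lkn; rewrite !cmp_mkrow //.
case: ifP => [/andP[k_gt1 lkp]|_].
  have -> : (k == p.+2) = false by lia.
  by rewrite sx ?mul0r //; lia.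
by case: eqP; rewrite ?x_p1 ?y_q1 ?mulr1.
Qed.

Lemma lead_at_top : lead_at p.+2 (evec p.+2).
Proof.
by split=> [k lkn out|]; rewrite cmp_evec //; [case: eqP => // kp2; lia | rewrite eqxx].
Qed.

Lemma supp_in_sub_lead i b v :
  supp_in i v -> lead_at i b -> supp_in i.+1 (v - cmp v i *: b).
Proof.
move=> sv [sb b_i] k lkn out; rewrite !cmpE.
have [->|k_neq_i] := eqVneq k i; first by rewrite b_i mulr1 subrr.
by rewrite sv ?sb ?mulr0 ?subr0 //; lia.
Qed.

Lemma in_L_triangular S N (b : nat -> V) :
    (forall i, (0 < i <= p.+2)%N -> lead_at i (b i) /\ in_L mul one S N (b i)) ->
  forall v, supp_in 1 v -> in_L mul one S N v.
Proof.
move=> Hb; suff: forall d v, (d <= p.+2)%N -> supp_in (p.+3 - d) v -> in_L mul one S N v.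
  by move=> Hd v sv; apply: (Hd p.+2); rewrite // !subSS subSnn.
elim=> [|d IH] v ld sv.
  have -> : v = 0 by apply: cmp_inj => k lkn; rewrite cmp0 sv //; lia.
  exact: in_L0.
have /Hb[lb Lb] : (0 < p.+2 - d <= p.+2)%N by lia.
move: lb Lb; set i := (p.+2 - d)%N => lb Lb.
rewrite -(subrK (cmp v i *: b i) v) addrC.
apply: in_L_lin Lb (IH _ _ _); first lia.
rewrite (_ : (p.+3 - d = i.+1)%N); last lia.
by apply: supp_in_sub_lead lb; rewrite /i -subSS.
Qed.

Lemma in_FSM_lead_at1 S : in_FSM S (evec 1) ->
  exists2 x, in_L mul one S 1 x & lead_at 1 x.
Proof.
move=> [a [u [uS e1_au]]]; exists (a *: one + u).
  by apply: in_L_lin (in_L_one _ _ _ _) (in_L_span _ _ _ uS).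
have x_e1 k : (k < n)%N -> (k < 2)%N || (p.+2 < k)%N ->
    cmp (a *: one + u) k = (k == 1%N)%:R.
  move=> lkn out; rewrite -(cmp_evec 1 lkn) -[RHS]subr0 -[X in _ - X](e1_au k lkn out).
  by rewrite !cmpE; ring.
split=> [k lkn out|]; last by rewrite x_e1 //; lia.
rewrite x_e1 //; last lia.
by have -> : (k == 1%N) = false by lia.
Qed.

Lemma in_L_supp1 S x : in_L mul one S 1 x -> lead_at 1 x ->
  forall v, supp_in 1 v -> in_L mul one S K v.
Proof.
move=> Lx lx; apply: (in_L_triangular (b := fun i => if (i <= p.+1)%N
  then sqpow mul x i.-1 else mul (sqpow mul x p) (sqpow mul x q))).
move=> i; case: (leqP i p.+1) => [lip|lpi] /andP[i_gt0 lip2].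
  split; first by rewrite -{1}(prednK i_gt0); apply: lead_at_sqpow lx _; lia.
  apply: in_L_leq (in_L_sqpow mul_bilinear mul_unit _ Lx).
  by apply: leq_trans (leq_addr _ _); rewrite leq_exp2l //; lia.
rewrite (_ : i = p.+2); last lia.
have top := mul_lead_top (lead_at_sqpow lx (leqnn p)) (lead_at_sqpow lx q_le_p).
split; first by rewrite top; exact: lead_at_top.
exact: (in_L_mul mul_bilinear mul_unit
         (in_L_sqpow mul_bilinear mul_unit p Lx) (in_L_sqpow mul_bilinear mul_unit q Lx)).
Qed.

Lemma L_full_of_in_FSM S : (forall v, in_FSM S v) -> L_full mul one S K.
Proof.
move=> HS v; have [x Lx lx] := in_FSM_lead_at1 (HS (evec 1)).
have [a [u [uS t]]] := HS v.
have -> : v = a *: one + (1 *: u + (v - a *: one - u)).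
  by apply: cmp_inj => k _; rewrite !cmpE; ring.
have K_gt0 : (0 < K)%N by rewrite addn_gt0 expn_gt0.
apply: in_L_lin (in_L_one _ _ _ _) (in_L_lin _ (in_L_span _ _ K_gt0 uS) _).
exact: in_L_supp1 Lx lx _ (supp_in_leq _ t).
Qed.

Lemma alg_length_example : alg_length mul one K.
Proof.
apply: (alg_length_witness (S0 := S0)).
- exact: L_full_of_in_FSM in_FSM_S0.
- exact: not_L_full_S0.
- by move=> S /generating_in_FSM; exact: L_full_of_in_FSM.
Qed.

End Example.

Theorem proposition4p4 (F : fieldType) (n : nat) (hn : (4 < n)%N)
  (p q : nat) (hp2 : (2 <= p)%N) (hpn : (p <= n - 3)%N) (hqp : (q <= p)%N) :
  exists (mul : 'rV[F]_n -> 'rV[F]_n -> 'rV[F]_n) (one : 'rV[F]_n),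
    bilinear_mul mul /\ is_unit_elt mul one /\
    alg_length mul one (2 ^ p + 2 ^ q)%N.
Proof.
case: n hn hpn => [//|m] _ hpn.
have p3_le_n : (p.+3 <= m.+1)%N by lia.
exists (@mul F m p q), (@one F m); split; first exact: mul_bilinear.
by split; [exact: mul_unit | exact: alg_length_example].
Qed.
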